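(* Let $P:\mathbb{Z}^2\to\mathbb{R}\mathrm{P}^n$ be a Q-net and let $m<n$ be a positive integer. Generically, $\mathcal{L}_A^mP$ is Goursat degenerate if and only if for every $j\in\mathbb{Z}$ the points $\{P_{i,j}\}_{i\in\mathbb{Z}}$ are contained in an $m$-dimensional projective subspace of $\mathbb{R}\mathrm{P}^n$.
   Context: A Q-net is a map $P:\mathbb{Z}^2\to\mathbb{R}\mathrm{P}^n$ such that for all $(i,j)$ the points $P_{i,j},P_{i+1,j},P_{i+1,j+1},P_{i,j+1}$ are coplanar. Laplace transforms: $\mathcal{L}_AP(i,j)=(P_{i,j}\vee P_{i+1,j})\cap(P_{i,j+1}\vee P_{i+1,j+1})$, $\mathcal{L}_BP(i,j)=(P_{i,j}\vee P_{i,j+1})\cap(P_{i+1,j}\vee P_{i+1,j+1})$ ($\vee$ = projective join); these are again Q-nets and $\mathcal{L}_A^m,\mathcal{L}_B^m$ denote iterates. $\mathcal{L}_A^mP$ is called Goursat degenerate if $\mathcal{L}_A^mP(i,j)$ is independent of $i$ (and Laplace degenerate if independent of $j$); $\mathcal{L}_B^mP$ is Goursat degenerate if $\mathcal{L}_B^mP(i,j)$ is independent of $j$ (Laplace degenerate if independent of $i$). ''Generically'' means for data in general position subject to the stated constraints. *)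

(* Projective space RP^n is modelled by the row spaces of
   (n+1)x(n+1) real matrices (mxalgebra): a point of RP^n is a subspace of
   rank 1, a projective k-dimensional subspace is a subspace of rank k+1,
   the projective join is (_ + _)%MS and the intersection is (_ :&: _)%MS. *)
From HB Require Import structures.
From mathcomp Require Import all_boot all_order all_algebra.
From mathcomp Require Import reals.
Set Implicit Arguments. Unset Strict Implicit. Unset Printing Implicit Defensive.
Import Order.TTheory GRing.Theory Num.Theory.
Local Open Scope ring_scope.

Section Qnets.
Variables (R : realType) (n : nat).

Definition psub := 'M[R]_(n.+1).

Definition net := int -> int -> psub.

Definition is_point (A : psub) : Prop := \rank A = 1%N.

Definition Qnet (P : net) : Prop :=
  forall i j, is_point (P i j) /\
    (\rank (P i j + P (i + 1)%R j + P (i + 1)%R (j + 1)%R + P i (j + 1)%R)%MS <= 3)%N.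

Definition LA (P : net) : net := fun i j =>
  ((P i j + P (i + 1)%R j) :&: (P i (j + 1)%R + P (i + 1)%R (j + 1)%R))%MS.

Definition LB (P : net) : net := fun i j =>
  ((P i j + P i (j + 1)%R) :&: (P (i + 1)%R j + P (i + 1)%R (j + 1)%R))%MS.

Definition LAm (m : nat) (P : net) : net := iter m LA P.

Definition LA_Goursat_degenerate (m : nat) (P : net) : Prop :=
  forall i i' j, (LAm m P i j == LAm m P i' j)%MS.

Definition row_in_proj_subspace (m : nat) (P : net) (j : int) : Prop :=
  exists U : psub, \rank U = m.+1 /\ forall i, (P i j <= U)%MS.

Definition LA_well_defined (m : nat) (P : net) : Prop :=
  forall k, (k < m)%N -> forall i j,
    \rank (LAm k P i j + LAm k P (i + 1)%R j)%MS = 2%N /\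
    \rank (LAm k P i (j + 1)%R + LAm k P (i + 1)%R (j + 1)%R)%MS = 2%N /\
    is_point (LAm k.+1 P i j).

Definition LA_new_points_distinct (m : nat) (P : net) : Prop :=
  forall k, (k < m)%N -> forall i j,
    ~~ (LAm k.+1 P i j == LAm k P i j)%MS /\
    ~~ (LAm k.+1 P i j == LAm k P (i + 1)%R j)%MS.

Definition LA_rows_general (m : nat) (P : net) : Prop :=
  forall k, (k < m)%N -> forall j, ~ (forall V : psub,
    (forall i, (LAm k P i (j + 1)%R <= V)%MS) ->
    (forall i, (LAm k P i j <= V)%MS)).

Definition generic_for_LA (m : nat) (P : net) : Prop :=
  [/\ LA_well_defined m P, LA_new_points_distinct m P & LA_rows_general m P].

End Qnets.

(* Generically L_A P(i,j) is a third point on the line P(i,j) v P(i+1,j), so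
   that line is spanned by L_A P(i,j) together with either endpoint.  Hence
   the row j of P lies in the span of the row j of L_A P and the point P(0,j):
   passing from L_A P back to P raises the dimension of a row span by at most
   one.  Conversely the row j of L_A P lies in the intersection of the spans
   of the rows j and j+1 of P, which generically is a proper subspace of the
   span of the row j: passing from P to L_A P lowers that dimension by at
   least one.  Iterating m times, the row j of L_A^m P is a single point iff
   the row j of P spans a projective subspace of dimension at most m. *)
From mathcomp Require Import all_boot all_order all_algebra.
From mathcomp Require Import boolp reals.
From mathcomp Require Import zify.
Set Implicit Arguments. Unset Strict Implicit. Unset Printing Implicit Defensive.
Import Order.TTheory GRing.Theory Num.Theory.
Local Open Scope ring_scope.

Lemma int_shift_ind (Q : int -> Prop) :
  Q 0 -> (forall i, Q i <-> Q (i + 1)) -> forall i, Q i.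
Proof.
move=> Q0 QS; elim/int_rect => [//|k Qk|k Qk].
  by rewrite -addn1 PoszD; apply: (QS k).1.
by apply: (QS _).2; rewrite -addn1 PoszD opprD addrNK.
Qed.

Section Subspaces.
Variables (F : fieldType) (d : nat).

Lemma exchange_submx p q r (X : 'M[F]_(p, d)) (Y : 'M_(q, d)) (Z : 'M_(r, d)) :
  (\rank X <= 1)%N -> (Z <= X + Y)%MS -> ~~ (Z <= Y)%MS -> (X <= Y + Z)%MS.
Proof.
move=> rX ZXY nZY.
have sYZ : (Y + Z <= X + Y)%MS by rewrite addsmx_sub addsmxSr ZXY.
have [rXY _] := mxrank_adds_leqif X Y.
have rYZ : (\rank Y < \rank (Y + Z))%N.
  by rewrite (ltn_leqif (mxrank_leqif_sup (addsmxSl Y Z))) addsmx_sub submx_refl.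
apply: submx_trans (addsmxSl X Y) _.
by rewrite -(mxrank_leqif_sup sYZ).2 eqn_leq mxrankS //=; lia.
Qed.

Lemma submx_rank_eqmx p q (A : 'M[F]_(p, d)) (B : 'M_(q, d)) :
  (A <= B)%MS -> (\rank B <= \rank A)%N -> (A == B)%MS.
Proof. by move=> sAB rBA; rewrite -(mxrank_leqif_eq sAB).2 eqn_leq rBA mxrankS. Qed.

Lemma least_supmx (I : Type) p (S : I -> 'M[F]_(p, d)) : exists U : 'M[F]_d,
  (forall i, S i <= U)%MS /\ forall V : 'M_d, (forall i, S i <= V)%MS -> (U <= V)%MS.
Proof.
pose bounds (r : nat) := `[< exists U : 'M[F]_d, \rank U = r /\ forall i, (S i <= U)%MS >].
have bounds_d : bounds d.
  by apply/asboolP; exists 1%:M; split=> [|i]; [exact: mxrank1 | exact: submx1].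
case: (ex_minnP (ex_intro bounds d bounds_d)) => r /asboolP[U [rU SU]] min_r.
exists U; split=> // V SV.
have SUV i : (S i <= U :&: V)%MS by rewrite sub_capmx SU SV.
have /min_r : bounds (\rank (U :&: V)) by apply/asboolP; exists (U :&: V)%MS.
rewrite -rU => /(submx_rank_eqmx (capmxSl U V))/andP[_].
by rewrite sub_capmx => /andP[].
Qed.

Definition span_of (I : Type) p (S : I -> 'M[F]_(p, d)) : 'M[F]_d :=
  projT1 (cid (least_supmx S)).

Lemma span_of_sub (I : Type) p (S : I -> 'M[F]_(p, d)) i : (S i <= span_of S)%MS.
Proof. exact: (projT2 (cid (least_supmx S))).1. Qed.

Lemma span_of_min (I : Type) p (S : I -> 'M[F]_(p, d)) (V : 'M_d) :
  (forall i, S i <= V)%MS -> (span_of S <= V)%MS.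
Proof. exact: (projT2 (cid (least_supmx S))).2. Qed.

Lemma supmx_rank_succ (U : 'M[F]_d) : (\rank U < d)%N ->
  exists W : 'M[F]_d, (U <= W)%MS /\ \rank W = (\rank U).+1.
Proof.
move=> rU; have [i nUi] : exists i, ~~ (row i (1%:M : 'M[F]_d) <= U)%MS.
  apply/existsP; apply: contraLR rU; rewrite negb_exists -leqNgt => /forallP Urows.
  by rewrite -{1}(mxrank1 F d) mxrankS //; apply/row_subP => i; apply/negPn.
set v := row i _ in nUi; exists (U + v)%MS; split; first exact: addsmxSl.
have [rsum _] := mxrank_adds_leqif U v.
have := rank_leq_row v.
have : (\rank U < \rank (U + v))%N.
  by rewrite (ltn_leqif (mxrank_leqif_sup (addsmxSl _ _))) addsmx_sub submx_refl.
lia.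
Qed.

Lemma supmx_of_rank (U : 'M[F]_d) r : (\rank U <= r <= d)%N ->
  exists W : 'M[F]_d, (U <= W)%MS /\ \rank W = r.
Proof.
elim: r => [|r IHr] /andP[rU rd].
  by exists U; split; [exact: submx_refl | lia].
have [eq_rU | lt_rU] := eqVneq (\rank U) r.+1; first by exists U; rewrite submx_refl.
have [W [UW rW]] : exists W : 'M[F]_d, (U <= W)%MS /\ \rank W = r.
  by apply: IHr; apply/andP; split; lia.
have [W' [WW' rW']] := supmx_rank_succ (ltac:(lia) : (\rank W < d)%N).
by exists W'; split; [exact: submx_trans WW' | rewrite rW' rW].
Qed.

End Subspaces.

Section Nets.
Variables (R : realType) (n : nat).
Implicit Types (P Q : net R n) (m : nat) (j : int).

Definition row_span Q j : psub R n := span_of (fun i => Q i j).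

Lemma row_in_proj_subspaceE m Q j : (m <= n)%N ->
  row_in_proj_subspace m Q j <-> (\rank (row_span Q j) <= m.+1)%N.
Proof.
move=> le_mn; split=> [[U [rU QU]] | rQ].
  by rewrite -rU mxrankS // span_of_min.
have [U [QU rU]] : exists U : psub R n, (row_span Q j <= U)%MS /\ \rank U = m.+1.
  by apply: supmx_of_rank; apply/andP; split; lia.
by exists U; split=> // i; exact: submx_trans (span_of_sub _ i) QU.
Qed.

Lemma row_span_LA_sub Q j : (row_span (LA Q) j <= row_span Q j :&: row_span Q (j + 1)%R)%MS.
Proof.
apply: span_of_min => i; rewrite sub_capmx; apply/andP; split.
  by apply: submx_trans (capmxSl _ _) _; rewrite addsmx_sub !span_of_sub.
by apply: submx_trans (capmxSr _ _) _; rewrite addsmx_sub !span_of_sub.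
Qed.

Lemma rank_row_span_LA_lt Q j :
  ~ (forall V : psub R n, (forall i, Q i (j + 1)%R <= V)%MS -> forall i, (Q i j <= V)%MS) ->
  (\rank (row_span (LA Q) j) < \rank (row_span Q j))%N.
Proof.
move=> rows_general; apply: leq_ltn_trans (mxrankS (row_span_LA_sub Q j)) _.
rewrite (ltn_leqif (mxrank_leqif_sup (capmxSl _ _))) sub_capmx submx_refl /=.
apply/negP => sub_rows; apply: rows_general => V QV i.
exact: submx_trans (span_of_sub _ i) (submx_trans sub_rows (span_of_min QV)).
Qed.

Lemma point_not_submx (A B : psub R n) :
  is_point A -> is_point B -> ~~ (A == B)%MS -> ~~ (A <= B)%MS.
Proof. by move=> pA pB; apply: contra => /submx_rank_eqmx; apply; rewrite pA pB. Qed.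

Section OneStep.
Variables (Q : net R n) (j : int).
Hypothesis points : forall i, is_point (Q i j).
Hypothesis LA_points : forall i, is_point (LA Q i j).
Hypothesis LA_new : forall i, ~~ (LA Q i j == Q i j)%MS /\ ~~ (LA Q i j == Q (i + 1)%R j)%MS.

Lemma row_span_sub_LA : (row_span Q j <= row_span (LA Q) j + Q 0 j)%MS.
Proof.
apply: span_of_min; set W := (_ + _)%MS.
have LA_W i : (LA Q i j <= W)%MS.
  exact: submx_trans (span_of_sub (fun k => LA Q k j) i) (addsmxSl _ _).
have on_line i : (LA Q i j <= Q i j + Q (i + 1)%R j)%MS by exact: capmxSl.
have line_succ i : (Q (i + 1)%R j <= Q i j + LA Q i j)%MS.
  apply: exchange_submx; first by rewrite points.
    by rewrite addsmxC on_line.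
  exact: point_not_submx (LA_points i) (points i) (LA_new i).1.
have line_pred i : (Q i j <= Q (i + 1)%R j + LA Q i j)%MS.
  apply: exchange_submx; first by rewrite points.
    exact: on_line.
  exact: point_not_submx (LA_points i) (points (i + 1)) (LA_new i).2.
apply: int_shift_ind; first exact: addsmxSr.
move=> i; split=> QiW.
  by apply: submx_trans (line_succ i) _; rewrite addsmx_sub QiW LA_W.
by apply: submx_trans (line_pred i) _; rewrite addsmx_sub QiW LA_W.
Qed.

Lemma rank_row_span_le_LA : (\rank (row_span Q j) <= (\rank (row_span (LA Q) j)).+1)%N.
Proof.
apply: leq_trans (mxrankS row_span_sub_LA) _.
have [rsum _] := mxrank_adds_leqif (row_span (LA Q) j) (Q 0 j).
by move: rsum; rewrite (points 0) addn1.
Qed.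

End OneStep.

Lemma rank_row_span_le1 Q j : (forall i, is_point (Q i j)) ->
  (\rank (row_span Q j) <= 1)%N <-> forall i i', (Q i j == Q i' j)%MS.
Proof.
move=> points; split=> [r1 i i' | Qconst].
  have eq_span k : (Q k j == row_span Q j)%MS.
    by apply: submx_rank_eqmx; [exact: span_of_sub | rewrite (points k)].
  by apply/eqmxP; apply: eqmx_trans (eqmxP (eq_span i)) (eqmx_sym (eqmxP (eq_span i'))).
rewrite -(points 0) mxrankS // span_of_min // => i.
by have /andP[] := Qconst i 0.
Qed.

Lemma LAm_points m P : Qnet P -> LA_well_defined m P ->
  forall k, (k <= m)%N -> forall i j, is_point (LAm k P i j).
Proof.
move=> QP WD [|k] le_km i j; first exact: (QP i j).1.
exact: (WD k le_km i j).2.2.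
Qed.

Lemma rank_row_span_le_LAm m P j : Qnet P -> LA_well_defined m P ->
  LA_new_points_distinct m P ->
  (\rank (row_span P j) <= \rank (row_span (LAm m P) j) + m)%N.
Proof.
move=> QP WD ND; have points := LAm_points QP WD.
suff grow k : (k <= m)%N -> (\rank (row_span P j) <= \rank (row_span (LAm k P) j) + k)%N.
  exact: grow.
elim: k => [|k IHk] lt_km; first by rewrite addn0.
apply: leq_trans (IHk (ltnW lt_km)) _; rewrite addnS -addSn leq_add2r.
apply: rank_row_span_le_LA => i.
- exact: points k (ltnW lt_km) i j.
- exact: points k.+1 lt_km i j.
- exact: ND k lt_km i j.
Qed.

Lemma rank_row_span_LAm_le m P j : LA_rows_general m P ->
  (\rank (row_span (LAm m P) j) + m <= \rank (row_span P j))%N.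
Proof.
move=> G; suff shrink k : (k <= m)%N ->
    (\rank (row_span (LAm k P) j) + k <= \rank (row_span P j))%N.
  exact: shrink.
elim: k => [|k IHk] lt_km; first by rewrite addn0.
apply: leq_trans (IHk (ltnW lt_km)); rewrite addnS -addSn leq_add2r.
exact/rank_row_span_LA_lt/G.
Qed.

End Nets.

Theorem proposition2p2 (R : realType) (n m : nat) (P : net R n) :
  Qnet P -> (0 < m)%N -> (m < n)%N ->
  generic_for_LA m P ->
  (LA_Goursat_degenerate m P <-> forall j : int, row_in_proj_subspace m P j).
Proof.
move=> QP _ lt_mn [WD ND G].
have collapse j : (\rank (row_span (LAm m P) j) <= 1)%N <->
    forall i i', (LAm m P i j == LAm m P i' j)%MS.
  exact: rank_row_span_le1 (fun i => LAm_points QP WD (leqnn m) i j).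
split=> [GD j | rows i i' j].
  apply/row_in_proj_subspaceE; first exact: ltnW.
  have := rank_row_span_le_LAm j QP WD ND.
  by have := (collapse j).2 (fun i i' => GD i i' j); lia.
apply: (collapse j).1; have := rank_row_span_LAm_le j G.
by have := (row_in_proj_subspaceE P j (ltnW lt_mn)).1 (rows j); lia.
Qed.
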